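(* Let $k$ be a positive integer. A graph $G$ belongs to $\mathcal{F}_k$ if and only if $G=G_1*_k G_2$ where, for each $i=1,2$, either $G_i=K_1$ or $G_i$ is uniformly dense with density $k$.
   Context: Graphs are finite, loopless, possibly with multiple edges. $\kappa'(G)$ is the edge connectivity; $\tau(G)$ is the maximum number of edge-disjoint spanning trees of a connected graph $G$. $\omega(G)$ is the number of components. For a nontrivial graph $G$, $d(G)=\frac{|E(G)|}{|V(G)|-\omega(G)}$ and $\gamma(G)=\max d(H)$ over subgraphs $H$ with nonzero denominator; $G$ is uniformly dense with density $k$ if $d(G)=\gamma(G)=k$. For vertex-disjoint connected graphs $G_1,G_2$ and a set $K$ of $k$ edges each having one end in $V(G_1)$ and the other in $V(G_2)$, the $k$-edge-join $G_1*_k G_2$ is the graph with vertex set $V(G_1)\cup V(G_2)$ and edge set $E(G_1)\cup E(G_2)\cup K$. For $n>1$, $\mathcal{F}_{k,n}$ is the set of graphs $G$ on $n$ vertices with $\kappa'(G)=\tau(G)=k$ whose number of edges is minimum among all graphs on $n$ vertices with $\kappa'=\tau=k$; $\mathcal{F}_k=\bigcup_{n>1}\mathcal{F}_{k,n}$. *)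

From HB Require Import structures.
From mathcomp Require Import all_boot all_order all_algebra.
Set Implicit Arguments. Unset Strict Implicit. Unset Printing Implicit Defensive.
Import Order.TTheory GRing.Theory Num.Theory.

Record mgraph := MGraph {
  vert : finType;
  edge : finType;
  esrc : edge -> vert;
  edst : edge -> vert;
  loopless : forall e, esrc e != edst e }.

Section Defs.
Variable G : mgraph.

Definition is_subgraph (S : {set vert G}) (F : {set edge G}) : bool :=
  [forall e in F, (esrc e \in S) && (edst e \in S)].

Definition adj (F : {set edge G}) : rel (vert G) := fun x y =>
  [exists e in F, ((esrc e == x) && (edst e == y)) || ((esrc e == y) && (edst e == x))].

Definition ncomp (S : {set vert G}) (F : {set edge G}) : nat :=
  #|[set [set y in S | connect (adj F) x y] | x in S]|.

Definition connectedb (S : {set vert G}) (F : {set edge G}) : bool :=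
  (S != set0) && [forall x in S, [forall y in S, connect (adj F) x y]].

Definition dnm (S : {set vert G}) (F : {set edge G}) : nat := (#|S| - ncomp S F)%N.
Definition dens (S : {set vert G}) (F : {set edge G}) : rat :=
  (#|F|%:R / (dnm S F)%:R)%R.

(* gamma(H) = max d(H') over subgraphs H' of H with nonzero denominator
   (all densities are >= 0, so the default 0 is harmless). *)
Definition gamma (S : {set vert G}) (F : {set edge G}) : rat :=
  (\big[Num.max/0]_(p : {set vert G} * {set edge G} |
      [&& p.1 \subset S, p.2 \subset F, is_subgraph p.1 p.2 & (0 < dnm p.1 p.2)%N])
     dens p.1 p.2)%R.

Definition uniformly_dense (S : {set vert G}) (F : {set edge G}) (k : nat) : Prop :=
  dens S F = (k%:R)%R /\ gamma S F = (k%:R)%R.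

Definition induced (S : {set vert G}) : {set edge G} :=
  [set e | (esrc e \in S) && (edst e \in S)].

Definition kappa'_eq (k : nat) : Prop :=
  (exists F : {set edge G}, #|F| = k /\ ~~ connectedb setT (~: F)) /\
  (forall F : {set edge G}, #|F| < k -> connectedb setT (~: F)).

Definition spanning_tree (T : {set edge G}) : bool :=
  connectedb setT T && [forall e in T, ~~ connectedb setT (T :\ e)].

Definition has_edst (k : nat) : Prop :=
  exists Ts : 'I_k -> {set edge G},
    (forall i, spanning_tree (Ts i)) /\
    (forall i j, i != j -> [disjoint Ts i & Ts j]).

Definition tau_eq (k : nat) : Prop := has_edst k /\ ~ has_edst k.+1.

(* G = G1 *_k G2 with each Gi = K1 or uniformly dense of density k.
   G1 = G[V1], G2 = G[V \ V1] (the edges of G inside V_i are exactly E(G_i)). *)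
Definition K1_or_ud (S : {set vert G}) (k : nat) : Prop :=
  #|S| = 1 \/ uniformly_dense S (induced S) k.

Definition edge_join_decomp (k : nat) : Prop :=
  exists V1 : {set vert G},
    [/\ connectedb V1 (induced V1),
        connectedb (~: V1) (induced (~: V1)),
        #|[set e | ((esrc e \in V1) && (edst e \in ~: V1)) ||
                   ((esrc e \in ~: V1) && (edst e \in V1))]| = k,
        K1_or_ud V1 k &
        K1_or_ud (~: V1) k].

End Defs.

Definition in_F (k : nat) (G : mgraph) : Prop :=
  [/\ 1 < #|vert G|, kappa'_eq G k, tau_eq G k &
      forall G' : mgraph, #|vert G'| = #|vert G| ->
        kappa'_eq G' k -> tau_eq G' k -> #|edge G| <= #|edge G'|].

From mathcomp Require Import all_boot all_order all_algebra.
From mathcomp Require Import zify.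
Set Implicit Arguments. Unset Strict Implicit. Unset Printing Implicit Defensive.
Import Order.TTheory GRing.Theory Num.Theory.

(* Let n = #|V(G)|. Since k edge-disjoint spanning trees need k (n - 1) edges,
   and k parallel copies of a path on n vertices have kappa' = tau = k with
   exactly that many edges, the graphs of F_k are those with kappa' = tau = k
   and k (n - 1) edges, i.e. whose edge set is partitioned by k spanning trees.
   Given a k-edge cut (V1, V2) of such a graph, every tree crosses it, hence
   crosses it exactly once, so it restricts to a spanning tree of each side.
   Each side thus has k (#|Vi| - 1) edges covered by k forests, and covering by
   k forests bounds every density by k: the side is K1 or uniformly dense.
   Conversely, a side that is uniformly dense of density k satisfies the
   sparsity condition of Nash-Williams' theorem, whose matroid-partition proof
   (augmenting along shortest exchange chains) splits its edges into k forests,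
   spanning trees by counting. Joining the i-th trees of both sides by the i-th
   cut edge yields k edge-disjoint spanning trees with k (n - 1) edges in all. *)

Section Connectivity.
Variable G : mgraph.
Local Notation V := (vert G).
Local Notation E := (edge G).
Implicit Types (S W : {set V}) (F : {set E}) (x y : V) (e : E).

Lemma adj_sym F : symmetric (adj F).
Proof.
by move=> x y; apply/existsP/existsP => -[e /andP[eF h]]; exists e;
  rewrite eF /= orbC.
Qed.

Lemma connect_adj_sym F : connect_sym (adj F).
Proof. exact/sym_connect_sym/adj_sym. Qed.

Lemma adjP F x y :
  reflect (exists2 e, e \in F &
             (esrc e = x /\ edst e = y) \/ (esrc e = y /\ edst e = x))
          (adj F x y).
Proof.
apply: (iffP existsP) => [[e /andP[eF]]|[e eF]].
  by case/orP => /andP[/eqP h1 /eqP h2]; exists e => //; [left|right].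
by case=> -[h1 h2]; exists e; rewrite eF h1 h2 !eqxx ?orbT.
Qed.

Lemma connect_edge F e : e \in F -> connect (adj F) (esrc e) (edst e).
Proof. by move=> eF; apply/connect1/adjP; exists e => //; left. Qed.

Lemma connect_adjS F F' :
  F \subset F' -> subrel (connect (adj F)) (connect (adj F')).
Proof.
move=> sFF'; apply: connect_sub => x y /adjP[e eF h]; apply/connect1/adjP.
by exists e => //; apply: (subsetP sFF').
Qed.

Definition spans F e := connect (adj F) (esrc e) (edst e).

Lemma spans_mem F e : e \in F -> spans F e.
Proof. exact: connect_edge. Qed.

Lemma spansS F F' e : F \subset F' -> spans F e -> spans F' e.
Proof. by move=> sFF'; apply: connect_adjS sFF' _ _. Qed.

Lemma connect_adj_spans F F' :
  {in F, forall e, spans F' e} -> subrel (connect (adj F)) (connect (adj F')).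
Proof.
move=> h; apply: connect_sub => x y /adjP[e eF [[<- <-]|[<- <-]]].
  exact: h.
by rewrite connect_adj_sym; apply: h.
Qed.

Lemma connect_closed W F x y :
  (forall a b, a \in W -> adj F a b -> b \in W) ->
  x \in W -> connect (adj F) x y -> y \in W.
Proof.
move=> hW + /connectP[p pth ->]; elim: p x pth => [|z p IH] x //=.
by case/andP=> xz pth xW; apply: IH pth (hW _ _ xW xz).
Qed.

Lemma connectedbS S F F' : F \subset F' -> connectedb S F -> connectedb S F'.
Proof.
move=> sFF' /andP[ne /forall_inP h]; rewrite /connectedb ne.
apply/forall_inP => x xS; apply/forall_inP => y yS; apply: connect_adjS sFF' _ _ _.
by move/forall_inP: (h x xS); apply.
Qed.

Lemma connectedb_card1 S F : #|S| = 1 -> connectedb S F.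
Proof.
case/eqP/cards1P=> x ->; rewrite /connectedb; apply/andP; split.
  by apply/set0Pn; exists x; rewrite inE.
by apply/forall_inP => a /set1P->; apply/forall_inP => b /set1P->.
Qed.

Definition croot F := fingraph.root (adj F).

Lemma connect_croot F x y : connect (adj F) x y = (croot F x == croot F y).
Proof. by rewrite /croot root_connect //; apply: connect_adj_sym. Qed.

Lemma crootS F F' x : F \subset F' -> croot F' (croot F x) = croot F' x.
Proof.
move=> sFF'; apply/eqP; rewrite -connect_croot connect_adj_sym.
exact: connect_adjS sFF' _ _ (connect_root _ x).
Qed.

Lemma connect_setU1 F e x y : connect (adj (e |: F)) x y ->
  let r := croot F in
  r x = r y \/ (r x = r (esrc e) /\ r (edst e) = r y) \/
              (r x = r (edst e) /\ r (esrc e) = r y).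
Proof.
move=> /connectP[p pth ->] r; elim: p x pth => [|w p IH] x /=; first by left.
case/andP=> /adjP[f]; rewrite in_setU1 => /orP[/eqP->|fF] h /IH.
  by case: h => -[<- <-]; rewrite /r; intuition congruence.
have: r x = r w.
  rewrite /r; apply/eqP; rewrite -connect_croot.
  by case: h => -[<- <-]; [|rewrite connect_adj_sym]; exact: connect_edge.
intuition congruence.
Qed.

Lemma connect_setU1_spans F e :
  spans F e -> connect (adj (e |: F)) =2 connect (adj F).
Proof.
move=> se x y; apply/idP/idP; last exact/connect_adjS/subsetUr.
apply: connect_adj_spans => f; rewrite in_setU1 => /orP[/eqP->//|fF].
exact: spans_mem.
Qed.

End Connectivity.

Section Components.
Variable G : mgraph.
Local Notation V := (vert G).
Local Notation E := (edge G).
Implicit Types (S : {set V}) (F : {set E}) (x y : V) (e : E).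

Lemma ncompE S F : ncomp S F = #|[set croot F x | x in S]|.
Proof.
rewrite /ncomp.
have -> : [set [set y in S | connect (adj F) x y] | x in S] =
   [set [set y in S | croot F y == r] | r in [set croot F x | x in S]].
  rewrite -imset_comp; apply: eq_imset => x /=; apply/setP => y.
  by rewrite !inE connect_croot eq_sym.
rewrite card_in_imset // => r1 r2 /imsetP[x1 x1S ->] /imsetP[x2 x2S ->].
by move/setP/(_ x1); rewrite !inE x1S eqxx /= => /esym/eqP.
Qed.

Lemma eq_ncomp S F F' :
  connect (adj F) =2 connect (adj F') -> ncomp S F = ncomp S F'.
Proof.
move=> h; rewrite /ncomp.
suff -> : [set [set y in S | connect (adj F) x y] | x in S] =
          [set [set y in S | connect (adj F') x y] | x in S] by [].
by apply: eq_imset => x; apply/setP => y; rewrite !inE h.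
Qed.

Lemma ncompS S F F' : F \subset F' -> ncomp S F' <= ncomp S F.
Proof.
move=> sFF'; rewrite !ncompE.
have -> : [set croot F' x | x in S] =
          [set croot F' r | r in [set croot F x | x in S]].
  by rewrite -imset_comp; apply: eq_imset => x /=; rewrite crootS.
exact: leq_imset_card.
Qed.

Lemma ncomp_le S F : ncomp S F <= #|S|.
Proof. by rewrite ncompE leq_imset_card. Qed.

Lemma ncomp_gt0 S F : S != set0 -> 0 < ncomp S F.
Proof.
case/set0Pn=> x xS; rewrite ncompE card_gt0; apply/set0Pn.
by exists (croot F x); apply: imset_f.
Qed.

Lemma ncomp0 S : ncomp S set0 = #|S|.
Proof.
rewrite /ncomp -[RHS](card_in_imset (f := fun x : V => [set x])); last first.
  by move=> x y _ _ /set1_inj.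
suff -> : [set [set y in S | connect (adj set0) x y] | x in S] =
          [set [set x] | x in S] by [].
apply: eq_in_imset => x xS; apply/setP => y; rewrite !inE.
apply/andP/eqP => [[_ /connectP[[|z p] /= pth ->]]|->] //.
by case/andP: pth => /existsP[f]; rewrite inE.
Qed.

Lemma ncomp_setU1_spans S F e : spans F e -> ncomp S (e |: F) = ncomp S F.
Proof. by move=> h; apply/eq_ncomp/connect_setU1_spans. Qed.

Lemma ncomp_setU1_nspans S F e : esrc e \in S -> edst e \in S -> ~~ spans F e ->
  ncomp S F = (ncomp S (e |: F)).+1.
Proof.
move=> aS bS ns; rewrite !ncompE.
set a := esrc e; set b := edst e.
set r := croot F; set r' := croot (e |: F); set R := [set r x | x in S].
have sF : F \subset e |: F by apply: subsetUr.
have r'E x : r' (r x) = r' x by rewrite /r' /r crootS.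
have rab : r a != r b by rewrite -connect_croot.
have e1 : r' (r b) = r' (r a).
  rewrite !r'E; apply/eqP; rewrite -connect_croot connect_adj_sym.
  by apply: connect_edge; rewrite setU11.
have -> : [set r' x | x in S] = [set r' w | w in R :\ r b].
  apply/eqP; rewrite eqEsubset; apply/andP; split; last first.
    apply/subsetP=> z /imsetP[w]; rewrite !inE => /andP[_ /imsetP[x xS ->]] ->.
    by rewrite r'E; apply: imset_f.
  apply/subsetP=> z /imsetP[x xS ->]; rewrite -r'E.
  have: r x \in R by apply: imset_f.
  case: (eqVneq (r x) (r b)) => [-> _|hb xR].
    by rewrite e1; apply/imsetP; exists (r a); rewrite // in_setD1 rab imset_f.
  by apply/imsetP; exists (r x); rewrite ?inE ?hb.
rewrite card_in_imset; first by rewrite (cardsD1 (r b) R) imset_f.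
move=> w1 w2; rewrite !inE => /andP[h1 /imsetP[x1 _ E1]] /andP[h2 /imsetP[x2 _ E2]].
rewrite E1 E2 !r'E => /eqP; rewrite -connect_croot => /connect_setU1 /=.
rewrite -/r -/a -/b -E1 -E2 => -[//|[[_ h]|[h _]]].
  by rewrite h eqxx in h2.
by rewrite h eqxx in h1.
Qed.

Lemma connectedb_ncomp S F : connectedb S F -> ncomp S F = 1.
Proof.
case/andP=> /set0Pn[x xS] /forall_inP h; rewrite ncompE.
suff -> : [set croot F y | y in S] = [set croot F x] by rewrite cards1.
apply/setP => z; rewrite inE; apply/imsetP/eqP => [[y yS ->]|->]; last by exists x.
by apply/eqP; rewrite -connect_croot connect_adj_sym; move/forall_inP: (h x xS); apply.
Qed.

Lemma ncomp1_connectedb S F : S != set0 -> ncomp S F = 1 -> connectedb S F.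
Proof.
move=> ne; rewrite ncompE => /eqP/cards1P[r hr].
rewrite /connectedb ne; apply/forall_inP => x xS; apply/forall_inP => y yS.
have: croot F x \in [set r] by rewrite -hr imset_f.
have: croot F y \in [set r] by rewrite -hr imset_f.
by rewrite connect_croot !inE => /eqP -> /eqP ->.
Qed.

End Components.

Section Forests.
Variable G : mgraph.
Local Notation V := (vert G).
Local Notation E := (edge G).
Implicit Types (S : {set V}) (F A B J M X Y : {set E}) (e : E).

Definition forest F := [forall e in F, ~~ spans (F :\ e) e].

Lemma forestS F F' : F \subset F' -> forest F' -> forest F.
Proof.
move=> sFF' /forall_inP h; apply/forall_inP => e eF.
by apply: contra (h e (subsetP sFF' e eF)); apply/spansS/setSD.
Qed.

Lemma forest0 : forest set0.
Proof. by apply/forall_inP => e; rewrite inE. Qed.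

Lemma subgraphS S F F' : F \subset F' -> is_subgraph S F' -> is_subgraph S F.
Proof.
by move=> sFF' /forall_inP h; apply/forall_inP => e eF; apply: h (subsetP sFF' e eF).
Qed.

Lemma subgraphP S F e : is_subgraph S F -> e \in F -> (esrc e \in S) && (edst e \in S).
Proof. by move/forall_inP; apply. Qed.

Lemma subgraphT F : is_subgraph setT F.
Proof. by apply/forall_inP => e _; rewrite !inE. Qed.

Lemma subgraph_induced S : is_subgraph S (induced S).
Proof. by apply/forall_inP => e; rewrite inE. Qed.

Lemma card_subgraph_ncomp S F : is_subgraph S F ->
  #|S| <= #|F| + ncomp S F /\ (forest F -> #|F| + ncomp S F = #|S|).
Proof.
have [n] := ubnP #|F|; elim: n F => // n IH F /ltnSE leFn sg.
case: (set_0Vmem F) => [->|[e eF]].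
  by rewrite ncomp0 cards0.
have FE : F = e |: (F :\ e) by rewrite setD1K.
have sg' : is_subgraph S (F :\ e) by apply: subgraphS sg; apply: subsetDl.
have cF : #|F| = #|F :\ e|.+1 by rewrite (cardsD1 e F) eF.
have [IH1 IH2] := IH _ (leq_trans (proper_card (properD1 eF)) leFn) sg'.
have /andP[aS bS] := subgraphP sg eF.
case: (boolP (spans (F :\ e) e)) => sp.
  split; last by move/forall_inP/(_ e eF); rewrite sp.
  by rewrite {2}FE ncomp_setU1_spans // cF addSn (leq_trans IH1).
move: (ncomp_setU1_nspans aS bS sp); rewrite -FE => hc.
split; first by move: IH1; rewrite hc cF addnS addSn.
by move=> fo; rewrite -IH2 ?hc ?cF ?addnS ?addSn //; apply: forestS fo; apply: subsetDl.
Qed.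

Lemma leq_card_ncomp S F : is_subgraph S F -> #|S| <= #|F| + ncomp S F.
Proof. by case/card_subgraph_ncomp. Qed.

Lemma card_forest S F : is_subgraph S F -> forest F -> #|F| + ncomp S F = #|S|.
Proof. by case/card_subgraph_ncomp. Qed.

Lemma card_connected_forest S F :
  is_subgraph S F -> forest F -> connectedb S F -> #|F| = #|S| - 1.
Proof. by move=> sg fF cF; rewrite -(card_forest sg fF) connectedb_ncomp // addnK. Qed.

Lemma forest_card S F : is_subgraph S F -> #|F| + ncomp S F = #|S| -> forest F.
Proof.
move=> sg h; apply/forall_inP => e eF; apply/negP => sp.
have sg' : is_subgraph S (F :\ e) by apply: subgraphS sg; apply: subsetDl.
have hc : ncomp S F = ncomp S (F :\ e) by rewrite -{1}(setD1K eF) ncomp_setU1_spans.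
move: h (leq_card_ncomp sg'); rewrite hc (cardsD1 e F) eF; lia.
Qed.

Lemma ncomp_lt S F : is_subgraph S F -> F != set0 -> ncomp S F < #|S|.
Proof.
move=> sg /set0Pn[e eF]; have /andP[aS bS] := subgraphP sg eF.
have ns : ~~ spans set0 e.
  apply/negP => /connectP[[|z p] /= pth].
    by move=> h; move: (loopless e); rewrite -h eqxx.
  by case/andP: pth => /existsP[f]; rewrite inE.
have := ncomp_setU1_nspans aS bS ns; rewrite ncomp0 setU0 => ->.
by rewrite ltnS; apply: ncompS; rewrite sub1set.
Qed.

Lemma forestU1 J e : forest J -> e \notin J -> forest (e |: J) = ~~ spans J e.
Proof.
move=> fJ eJ; apply/idP/idP.
  by move/forall_inP/(_ e (setU11 _ _)); rewrite setU1K.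
move=> ns; apply/forall_inP => f; rewrite in_setU1 => /orP[/eqP->|fJ'].
  by rewrite setU1K.
have fe : f != e by apply: contraNneq eJ => <-.
have -> : (e |: J) :\ f = e |: (J :\ f).
  apply/setP => z; rewrite !inE; case: (eqVneq z e) => // ->.
  by rewrite eq_sym (negbTE fe).
apply/negP => /connect_setU1 /=.
have /forall_inP/(_ f fJ') := fJ; rewrite /spans connect_croot => /negP h.
have sJ := subsetDl J [set f].
have ef := connect_edge fJ'.
have lift x y : croot (J :\ f) x = croot (J :\ f) y -> connect (adj J) x y.
  by move/eqP; rewrite -connect_croot; apply: connect_adjS.
case=> [/eqP//|[[h1 h2]|[h1 h2]]]; apply/negP: ns; rewrite /spans negbK.
  have d1 := lift _ _ (esym h1); have d2 := lift _ _ (esym h2).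
  exact: connect_trans (connect_trans d1 ef) d2.
have d1 := lift _ _ h2; have d2 := lift _ _ h1.
by rewrite connect_adj_sym in ef; exact: connect_trans (connect_trans d1 ef) d2.
Qed.

Lemma spans_nforestU1 J e : forest J -> e \notin J -> ~~ forest (e |: J) -> spans J e.
Proof. by move=> fJ eJ; rewrite forestU1 // negbK. Qed.

Lemma forest_augment S A B : is_subgraph S A -> is_subgraph S B ->
  forest A -> forest B -> #|A| < #|B| -> exists2 b, b \in B :\: A & forest (b |: A).
Proof.
move=> sA sB fA fB ltAB.
case: (boolP [exists b in B :\: A, forest (b |: A)]) => [/exists_inP//|/exists_inPn h].
have sp : {in A :|: B, forall e, spans A e}.
  move=> e; case: (boolP (e \in A)) => [eA _|eA]; first exact: spans_mem.
  rewrite in_setU (negbTE eA) /= => eB.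
  by apply: spans_nforestU1 => //; apply: h; rewrite inE eA.
have ce : connect (adj (A :|: B)) =2 connect (adj A).
  by move=> x y; apply/idP/idP; [apply: connect_adj_spans|apply/connect_adjS/subsetUl].
have : ncomp S A <= ncomp S B by rewrite -(eq_ncomp S ce); apply/ncompS/subsetUr.
move: (card_forest sA fA) (card_forest sB fB); lia.
Qed.

Lemma forest_maximal A X : forest A -> A \subset X ->
  exists M, [/\ A \subset M, M \subset X, forest M &
                forall f, f \in X -> f \notin M -> ~~ forest (f |: M)].
Proof.
move: {2}#|X :\: A| (leqnn #|X :\: A|) => n; elim: n A => [|n IH] A.
  rewrite leqn0 cards_eq0 => /eqP h fA sAX; exists A; split => //.
  by move=> y yX yA; move/setP/(_ y): h; rewrite !inE yA yX.
move=> hn fA sAX.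
case: (boolP [exists y in X :\: A, forest (y |: A)]); last first.
  move/exists_inPn => h; exists A; split => // y yX yA.
  by apply: h; rewrite inE yA.
case/exists_inP=> y; rewrite inE => /andP[yA yX] fy.
have [||M [sAM sMX fM maxM]] := IH (y |: A) _ fy.
- move: hn; rewrite (cardsD1 y (X :\: A)) !inE yA yX /=.
  suff -> : X :\: (y |: A) = (X :\: A) :\ y by [].
  by apply/setP => z; rewrite !inE negb_or andbA.
- by rewrite subUset sub1set yX.
exists M; split => //; apply: subset_trans sAM; apply: subsetUr.
Qed.

Lemma spanning_treeE F : spanning_tree F = connectedb setT F && forest F.
Proof.
rewrite /spanning_tree; case: (boolP (connectedb setT F)) => //= cF.
apply: eq_forallb_in => e eF; congr (~~ _); apply/idP/idP.
  by case/andP=> _ /forall_inP/(_ _ (in_setT (esrc e)))/forall_inP/(_ _ (in_setT (edst e))).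
move=> sp; have ce := connect_setU1_spans sp; rewrite setD1K // in ce.
case/andP: cF => ne /forall_inP h; rewrite /connectedb ne.
apply/forall_inP => x _; apply/forall_inP => y _; rewrite -ce.
by move/forall_inP: (h x (in_setT _)); apply.
Qed.

Lemma card_spanning_tree F : spanning_tree F -> #|F|.+1 = #|V|.
Proof.
rewrite spanning_treeE => /andP[cF fF].
by rewrite -cardsT -(card_forest (subgraphT F) fF) connectedb_ncomp // addn1.
Qed.

End Forests.

Lemma card_bigcup_part (I T : finType) (A : I -> {set T}) :
  (forall i j x, x \in A i -> x \in A j -> i = j) ->
  #|\bigcup_i A i| = \sum_i #|A i|.
Proof.
move=> dA; rewrite -sum1_card partition_disjoint_bigcup; last first.
  move=> i j ij; rewrite -setI_eq0; apply/set0Pn => -[x /setIP[xi xj]].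
  by rewrite (dA _ _ _ xi xj) eqxx in ij.
by apply: eq_bigr => i _; rewrite sum1_card.
Qed.

Lemma sum_leq_const_eq k m (f : 'I_k -> nat) :
  (forall i, f i <= m) -> \sum_i f i = k * m -> forall i, f i = m.
Proof.
move=> le_fm sum_f i.
have [_] := leqif_sum (P := predT) (fun i _ => leqif_eq (le_fm i)).
by rewrite sum_f big_const_ord iter_addn_0 mulnC eqxx => /esym/forallP/(_ i)/eqP.
Qed.

Lemma sum_geq_const_eq k m (f : 'I_k -> nat) :
  (forall i, m <= f i) -> \sum_i f i = k * m -> forall i, f i = m.
Proof.
move=> le_mf sum_f i.
have [_] := leqif_sum (P := predT) (fun i _ => leqif_eq (le_mf i)).
by rewrite sum_f big_const_ord iter_addn_0 mulnC eqxx => /esym/forallP/(_ i)/eqP.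
Qed.

Section ForestPartition.
Variables (G : mgraph) (k : nat).
Local Notation V := (vert G).
Local Notation E := (edge G).
Implicit Types (S : {set V}) (F J U X Y : {set E}) (a b e z : E)
  (Is : 'I_k -> {set E}).

Definition forest_decomp Is U :=
  [/\ forall i, forest (Is i), forall i j e, e \in Is i -> e \in Is j -> i = j &
      forall e, (e \in U) = [exists i, e \in Is i]].

Definition insertable Is c a := (a \notin Is c) && forest (a |: Is c).

Definition exchangeable Is c a b :=
  [&& b \in Is c, a \notin Is c & forest (a |: (Is c :\ b))].

(* [augmentable Is a d]: some chain of at most [d] exchanges
   a -> b_1 -> ... -> b_n, followed by an insertion of b_n, makes room for a. *)
Fixpoint augmentable Is a d := match d with
  | 0 => [exists c, insertable Is c a]
  | d'.+1 => augmentable Is a d' ||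
      [exists c, [exists b, exchangeable Is c a b && augmentable Is b d']]
  end.

Definition set_forest Is c X := fun j => if j == c then X else Is j.

Lemma forestU1_exchange Y J a z : J \subset Y -> spans Y a -> forest Y ->
  forest (a |: J) -> a \notin J -> z \notin a |: J -> z \notin Y ->
  forest (z |: Y) -> forest (z |: (a |: J)).
Proof.
move=> sJY sa fY faJ aJ zaJ zY fzY; rewrite forestU1 //.
apply/negP => sz; move: fzY; rewrite forestU1 // => /negP; apply.
apply: connect_adj_spans sz => f; rewrite in_setU1 => /orP[/eqP->//|fJ].
by apply: spans_mem; apply: (subsetP sJY).
Qed.

Lemma forest_exchange_insert Y x b z : x \notin Y -> forest (x |: (Y :\ b)) ->
  z \notin Y -> forest (z |: Y) -> ~~ forest (x |: Y) ->
  (z \notin x |: (Y :\ b)) && forest (z |: (x |: (Y :\ b))).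
Proof.
move=> hx hf zY fzY nfx.
have zx : z != x by apply: contraNneq nfx => <-.
have fY : forest Y := forestS (subsetUr _ _) fzY.
have zY' : z \notin x |: (Y :\ b) by rewrite !inE negb_or zx negb_and zY orbT.
rewrite zY'; apply: (forestU1_exchange (Y := Y)) => //.
- exact: subsetDl.
- exact: spans_nforestU1.
- by rewrite inE negb_and hx orbT.
Qed.

Lemma forest_exchange_twice Y x b z b' : forest Y -> x \notin Y ->
  forest (x |: (Y :\ b)) -> b' \in Y -> z \notin Y -> forest (z |: (Y :\ b')) ->
  ~~ forest (x |: (Y :\ b')) -> z != x ->
  [&& b' \in x |: (Y :\ b), z \notin x |: (Y :\ b) &
      forest (z |: ((x |: (Y :\ b)) :\ b'))].
Proof.
move=> fY hx hf hb' zY fz nfx zx.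
have bb : b' != b by apply: contraNneq nfx => ->.
have xb : x != b' by apply: contraNneq hx => ->.
rewrite !inE bb hb' /= negb_or zx negb_and zY orbT /=.
have -> : (x |: (Y :\ b)) :\ b' = x |: ((Y :\ b) :\ b').
  by apply/setP => f; rewrite !inE; case: (eqVneq f x) => // ->; rewrite xb.
have fYb' : forest (Y :\ b') := forestS (subsetDl _ _) fY.
rewrite ?orbT /=; apply: (forestU1_exchange (Y := Y :\ b')) => //.
- by apply: setSD; apply: subsetDl.
- by apply: spans_nforestU1 => //; rewrite inE negb_and hx orbT.
- by apply: forestS hf; apply: setUS; apply: subsetDl.
- by rewrite !inE (negbTE hx) !andbF.
- by rewrite !inE (negbTE zx) (negbTE zY) !andbF.
- by rewrite !inE (negbTE zY) andbF.
Qed.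

(* Exchanging along the first step of a SHORTEST augmenting chain for x keeps
   every chain of length at most that of x valid. *)
Lemma augmentable_exchange Is c x b : (forall i, forest (Is i)) ->
  exchangeable Is c x b -> forall m z, augmentable Is z m ->
  ~~ augmentable Is x m -> augmentable (set_forest Is c (x |: (Is c :\ b))) z m.
Proof.
move=> fI /and3P[hb hx hf]; elim=> [|m IH] z /=.
  case/existsP=> c' fz /existsPn nx; apply/existsP; exists c'.
  move: fz; rewrite /insertable /set_forest /=; case: (eqVneq c' c) => [->|//].
  case/andP=> zc fzc; apply: forest_exchange_insert => //.
  by move: (nx c); rewrite /insertable hx.
case/orP=> [gz|/existsP[c' /existsP[b' /andP[az gb]]]];
  rewrite negb_or => /andP[ngx /existsPn nx]; first by rewrite IH.
apply/orP; right; apply/existsP; exists c'; apply/existsP; exists b'.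
rewrite IH // andbT.
move: az; rewrite /exchangeable /set_forest /=; case: (eqVneq c' c) => [->|//].
case/and3P=> hb' zc fz; apply: forest_exchange_twice => //.
  apply: contra (nx c) => fx; apply/existsP; exists b'.
  by rewrite /exchangeable hb' hx fx gb.
apply: contraNneq ngx => ezx; subst z; exfalso.
by move/existsP: (nx c); apply; exists b'; rewrite /exchangeable hb' zc fz gb.
Qed.

Lemma forest_decomp_set Is U c X U' : forest_decomp Is U -> forest X ->
  (forall e j, e \in X -> j != c -> e \notin Is j) ->
  (forall e, (e \in U') = (e \in X) || [exists j, (j != c) && (e \in Is j)]) ->
  forest_decomp (set_forest Is c X) U'.
Proof.
move=> [fI dI mI] fX dX mU; split.
- by move=> i; rewrite /set_forest; case: eqVneq.
- move=> i j e; rewrite /set_forest.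
  case: (eqVneq i c) => [->|ic]; case: (eqVneq j c) => [->|jc] //.
  + by move=> eX eJ; move: (dX e j eX jc); rewrite eJ.
  + by move=> eI eX; move: (dX e i eX ic); rewrite eI.
  + exact: dI.
- move=> e; rewrite mU; apply/idP/existsP => [/orP[eX|/existsP[j /andP[jc ej]]]|[j]].
  + by exists c; rewrite /set_forest eqxx.
  + by exists j; rewrite /set_forest (negbTE jc).
  rewrite /set_forest; case: eqVneq => [_ ->//|jc ej].
  by apply/orP; right; apply/existsP; exists j; rewrite jc.
Qed.

Lemma forest_decomp_augment d Is U x : forest_decomp Is U -> x \notin U ->
  augmentable Is x d -> exists Is', forest_decomp Is' (x |: U).
Proof.
elim: d Is U x => [|d IH] Is U x hd xU /=.
  case/existsP=> c /andP[xc fx]; exists (set_forest Is c (x |: Is c)).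
  case: (hd) => fI dI mI; apply: forest_decomp_set => //.
  - move=> e j; rewrite in_setU1 => /orP[/eqP->|ec] jc.
      by apply: contra xU => xj; rewrite mI; apply/existsP; exists j.
    by apply/negP => ej; move: jc; rewrite (dI _ _ _ ec ej) eqxx.
  - move=> e; rewrite !in_setU1 mI; case: (e == x) => //=.
    apply/existsP/idP => [[j ej]|].
      case: (eqVneq j c) => [ejc|jc]; first by rewrite -ejc ej.
      by apply/orP; right; apply/existsP; exists j; rewrite jc.
    by case/orP=> [ec|/existsP[j /andP[_ ej]]]; [exists c|exists j].
case/orP=> [gx|/existsP[c /existsP[b /andP[ab gb]]]]; first exact: IH gx.
have [gx|ngx] := boolP (augmentable Is x d); first exact: IH gx.
case: (hd) => fI dI mI; have /and3P[hb hx hf] := ab.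
have bU : b \in U by rewrite mI; apply/existsP; exists c.
have bx : b != x by apply: contraNneq hx => <-.
have hd' : forest_decomp (set_forest Is c (x |: (Is c :\ b))) (x |: (U :\ b)).
  apply: forest_decomp_set => //.
  - move=> e j; rewrite !inE => /orP[/eqP->|/andP[_ ec]] jc.
      by apply: contra xU => xj; rewrite mI; apply/existsP; exists j.
    by apply/negP => ej; move: jc; rewrite (dI _ _ _ ec ej) eqxx.
  - move=> e; rewrite !inE mI; case: (eqVneq e x) => //= ex.
    case: (eqVneq e b) => [->|eb] /=.
      apply/esym/negbTE/negP => /existsP[j /andP[jc bj]].
      by move: jc; rewrite (dI _ _ _ bj hb) eqxx.
    apply/existsP/orP => [[j ej]|[ec|/existsP[j /andP[jc ej]]]];
      [|by exists c|by exists j].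
    case: (eqVneq j c) => [ejc|jc]; first by left; rewrite -ejc.
    by right; apply/existsP; exists j; rewrite jc.
have bU' : b \notin x |: (U :\ b) by rewrite !inE (negbTE bx) eqxx.
have [Is'' h] := IH _ _ _ hd' bU' (augmentable_exchange fI ab gb ngx).
exists Is''; suff <- : b |: (x |: (U :\ b)) = x |: U by [].
by rewrite setUCA setD1K.
Qed.

Lemma augmentable_path Is x p d :
  path [rel a b | [exists c, exchangeable Is c a b]] x p ->
  augmentable Is (last x p) d -> exists d', augmentable Is x d'.
Proof.
elim: p x d => [|w p IH] x d /=; first by exists d.
case/andP=> /existsP[c axw] /(IH _ d) /[apply] [[d' gw]].
exists d'.+1; apply/orP; right; apply/existsP; exists c; apply/existsP.
by exists w; rewrite axw.
Qed.

Section Sparse.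
Variables (S : {set V}) (E0 : {set E}).
Hypothesis subgraph_E0 : is_subgraph S E0.
Hypothesis sparse_E0 : forall F, F \subset E0 -> #|F| <= k * (#|S| - ncomp S F).

Variables (Is : 'I_k -> {set E}) (U : {set E}) (x : E).
Hypotheses (decU : forest_decomp Is U) (xU : x \notin U) (xUE0 : x |: U \subset E0).

Let R := [set z | connect [rel a b | [exists c, exchangeable Is c a b]] x z].

Lemma reach_subset : R \subset E0.
Proof.
case: decU => _ _ mI; apply/subsetP => z; rewrite inE => /connectP[p pth ->].
apply: (subsetP xUE0); elim/last_ind: p pth => [|p w _]; first by rewrite setU11.
rewrite rcons_path last_rcons => /andP[_ /existsP[c /and3P[wc _ _]]].
by rewrite in_setU1 mI; apply/orP; right; apply/existsP; exists c.
Qed.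

(* If no element of R is insertable, take a maximal forest M between
   z |: (Is c :&: R) and z |: Is c: by augmentation it has #|Is c| edges, so it
   is z |: Is c :\ w, and w is reached from z by an exchange although w is
   not in M, hence not in R. *)
Lemma reach_spans : (forall z c, z \in R -> ~~ insertable Is c z) ->
  forall c z, z \in R -> spans (Is c :&: R) z.
Proof.
move=> noins c z zR; case: decU => fI _ mI.
have [zc|zc] := boolP (z \in Is c); first by apply: spans_mem; rewrite inE zc zR.
apply/negPn/negP => nsp.
have fA : forest (z |: (Is c :&: R)).
  by rewrite forestU1 ?inE ?(negbTE zc) //; apply: forestS (fI c); apply: subsetIl.
have [M [sAM sMX fM maxM]] := forest_maximal fA (setUS [set z] (subsetIl (Is c) R)).
have IcE0 : Is c \subset E0.
  apply: subset_trans xUE0; apply/subsetP => e ec; rewrite in_setU1 mI.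
  by apply/orP; right; apply/existsP; exists c.
have XE0 : z |: Is c \subset E0.
  by rewrite subUset sub1set (subsetP reach_subset) ?IcE0.
have nfz : ~~ forest (z |: Is c) by move: (noins z c zR); rewrite /insertable zc.
have cM : #|Is c| <= #|M|.
  rewrite leqNgt; apply/negP => lt.
  have [||b] := forest_augment (S := S) _ _ fM (fI c) lt.
  - exact: subgraphS (subset_trans sMX XE0) subgraph_E0.
  - exact: subgraphS IcE0 subgraph_E0.
  rewrite inE => /andP[bM bc] fb.
  by move: (maxM b); rewrite inE bc orbT bM fb => /(_ isT isT).
have [/exists_inP[w wc wM]|/exists_inPn h] := boolP [exists w in Is c, w \notin M];
  last first.
  suff eM : M = z |: Is c by rewrite eM (negbTE nfz) in fM.
  apply/eqP; rewrite eqEsubset sMX; apply/subsetP => f.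
  rewrite in_setU1 => /orP[/eqP->|fc]; last by move: (h f fc); rewrite negbK.
  by apply: (subsetP sAM); apply: setU11.
have Mw : M = z |: (Is c :\ w).
  apply/eqP; rewrite eqEcard; apply/andP; split.
    apply/subsetP => f Mf; move: (subsetP sMX f Mf); rewrite !inE.
    case: (eqVneq f z) => //= fz fc; rewrite fc andbT.
    by apply: contraNneq wM => <-.
  by rewrite cardsU1 !inE (negbTE zc) andbF /=; move: cM; rewrite (cardsD1 w (Is c)) wc.
have wR : w \in R.
  move: zR; rewrite !inE => /connect_trans; apply; apply: connect1 => /=.
  by apply/existsP; exists c; rewrite /exchangeable wc zc -Mw.
by move: wM; rewrite (subsetP sAM) // in_setU1 in_setI wc wR orbT.
Qed.

Lemma augmentable_of_sparse : exists d, augmentable Is x d.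
Proof.
have [/exists_inP[z]|/exists_inPn noins0] :=
  boolP [exists z in R, exists c, insertable Is c z].
  rewrite inE => /connectP[p pth ->] /existsP[c fz].
  by apply: (augmentable_path (d := 0)) pth _; apply/existsP; exists c.
have noins z c : z \in R -> ~~ insertable Is c z.
  by move=> zR; move/existsPn: (noins0 z zR); apply.
case: (decU) => fI dI mI; exfalso.
have card_c c : #|Is c :&: R| = #|S| - ncomp S R.
  have ce : connect (adj R) =2 connect (adj (Is c :&: R)).
    move=> a b; apply/idP/idP; last exact/connect_adjS/subsetIr.
    by apply: connect_adj_spans => z zR; apply: reach_spans.
  have sg : is_subgraph S (Is c :&: R).
    by apply: subgraphS subgraph_E0; apply: subset_trans reach_subset; apply: subsetIr.
  have := card_forest sg (forestS (subsetIl _ _) (fI c)).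
  by rewrite -(eq_ncomp S ce) => <-; rewrite addnK.
have sumR : \sum_(c < k) #|Is c :&: R| = #|U :&: R|.
  rewrite -card_bigcup_part; last first.
    by move=> i j e /setIP[ei _] /setIP[ej _]; apply: dI ei ej.
  apply: eq_card => e; rewrite inE mI; apply/bigcupP/andP.
    by case=> i _ /setIP[ei eR]; split => //; apply/existsP; exists i.
  by case=> /existsP[i ei] eR; exists i => //; rewrite inE ei.
have : #|U :&: R| < #|R|.
  apply: proper_card; rewrite properEneq subsetIr andbT.
  by apply/eqP => /setP/(_ x); rewrite !inE connect0 (negbTE xU).
move: (sparse_E0 reach_subset); rewrite -sumR.
under eq_bigr do rewrite card_c.
rewrite sum_nat_const card_ord; lia.
Qed.

End Sparse.

Lemma sparse_forest_decomp S E0 :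
  is_subgraph S E0 -> (forall F, F \subset E0 -> #|F| <= k * (#|S| - ncomp S F)) ->
  exists Is, forest_decomp Is E0.
Proof.
move=> sg sparse; suff : forall U, U \subset E0 -> exists Is, forest_decomp Is U.
  by apply; apply: subxx.
move=> U; have [n] := ubnP #|U|; elim: n U => // n IH U /ltnSE leUn sU.
have [->|[x xU]] := set_0Vmem U.
  exists (fun _ => set0); split => // [i|i j e|e]; rewrite ?inE ?forest0 //.
  by apply/esym/existsPn.
have xU' : x \notin U :\ x by rewrite !inE eqxx.
have [Is dIs] := IH (U :\ x) (leq_trans (proper_card (properD1 xU)) leUn)
                   (subset_trans (subsetDl U [set x]) sU).
have sxU : x |: (U :\ x) \subset E0 by rewrite setD1K.
have [d gd] := augmentable_of_sparse sg sparse dIs xU' sxU.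
by rewrite -(setD1K xU); apply: forest_decomp_augment gd.
Qed.

End ForestPartition.

Section Density.
Variable G : mgraph.
Local Notation V := (vert G).
Local Notation E := (edge G).
Implicit Types (S W : {set V}) (F : {set E}).

Lemma dens_natP S F k : 0 < k ->
  dens S F = (k%:R)%R -> 0 < dnm S F /\ #|F| = k * dnm S F.
Proof.
move=> k0; rewrite /dens; have [->|dpos] := posnP (dnm S F).
  rewrite invr0 mulr0 => /eqP; rewrite eq_sym pnatr_eq0 => /eqP k_eq0.
  by rewrite k_eq0 in k0.
move/(congr1 (fun r : rat => (r * (dnm S F)%:R)%R)).
rewrite divfK ?pnatr_eq0 -?lt0n // -natrM => /eqP; rewrite eqr_nat => /eqP ->.
by rewrite mulnC.
Qed.

Lemma dens_nat S F k : 0 < dnm S F -> #|F| = k * dnm S F -> dens S F = (k%:R)%R.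
Proof. by move=> dpos hF; rewrite /dens hF natrM mulfK // pnatr_eq0 -lt0n. Qed.

Lemma dens_le_gamma S F (p : {set V} * {set E}) :
  [&& p.1 \subset S, p.2 \subset F, is_subgraph p.1 p.2 & 0 < dnm p.1 p.2] ->
  (dens p.1 p.2 <= gamma S F)%R.
Proof. by move=> hp; rewrite /gamma; apply: le_bigmax_cond. Qed.

Lemma gamma_le_nat S F k :
  (forall S' F', S' \subset S -> F' \subset F -> is_subgraph S' F' ->
     #|F'| <= k * dnm S' F') -> (gamma S F <= k%:R)%R.
Proof.
move=> h; rewrite /gamma; apply/bigmax_leP.
split => [|[S' F'] /and4P[sS sF sg dpos]] /=; first exact: ler0n.
by rewrite /dens ler_pdivrMr ?ltr0n // -natrM ler_nat h.
Qed.

Lemma forest_decomp_card_setI k (Ts : 'I_k -> {set E}) F :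
  forest_decomp Ts setT -> \sum_i #|Ts i :&: F| = #|F|.
Proof.
case=> _ dT cT; rewrite -card_bigcup_part; last first.
  by move=> i j e /setIP[ei _] /setIP[ej _]; apply: dT ei ej.
apply: eq_card => e; apply/bigcupP/idP => [[i _ /setIP[]//]|eF].
by move: (cT e); rewrite inE => /esym/existsP[i ei]; exists i; rewrite ?inE ?ei.
Qed.

Lemma forest_decomp_sparse k (Ts : 'I_k -> {set E}) S F :
  forest_decomp Ts setT -> is_subgraph S F -> #|F| <= k * (#|S| - ncomp S F).
Proof.
move=> dTs sg; have [fT _ _] := dTs.
rewrite -(forest_decomp_card_setI F dTs) -[k in k * _]card_ord -sum_nat_const.
apply: leq_sum => i _.
have := card_forest (subgraphS (subsetIr (Ts i) F) sg) (forestS (subsetIl _ _) (fT i)).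
have := ncompS S (subsetIr (Ts i) F); lia.
Qed.

Lemma forest_decomp_subgraph k W (Is : 'I_k -> {set E}) i :
  forest_decomp Is (induced W) -> is_subgraph W (Is i).
Proof.
case=> _ _ mI; apply/forall_inP => e ei.
have : e \in induced W by rewrite mI; apply/existsP; exists i.
by rewrite inE.
Qed.

Definition tree_decomp (k : nat) W (Is : 'I_k -> {set E}) :=
  forest_decomp Is (induced W) /\ forall i, connectedb W (Is i).

Lemma tree_decomp_card_tree k W (Is : 'I_k -> {set E}) i :
  tree_decomp W Is -> #|Is i| = #|W| - 1.
Proof.
case=> dIs cI; have [fI _ _] := dIs.
exact: card_connected_forest (forest_decomp_subgraph i dIs) (fI i) (cI i).
Qed.

Lemma tree_decomp_card k W (Is : 'I_k -> {set E}) :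
  tree_decomp W Is -> #|induced W| = k * (#|W| - 1).
Proof.
move=> tW; have [[_ dI mI] _] := tW.
have -> : #|induced W| = #|\bigcup_i Is i|.
  by apply: eq_card => e; rewrite mI; apply/existsP/bigcupP => -[i]; exists i.
rewrite card_bigcup_part // -[k in k * _]card_ord -sum_nat_const.
by apply: eq_bigr => i _; apply: tree_decomp_card_tree.
Qed.

Lemma K1_or_ud_tree_decomp k W : 0 < k -> connectedb W (induced W) ->
  K1_or_ud W k -> exists Is : 'I_k -> {set E}, tree_decomp W Is.
Proof.
move=> k0 cW [W1|[hd hg]].
  exists (fun _ => set0); split => [|i]; last exact: connectedb_card1.
  have -> : induced W = set0.
    apply/setP => e; case/eqP/cards1P: W1 => x ->; rewrite !inE.
    by apply/negP => /andP[/eqP a /eqP b]; move: (loopless e); rewrite a b eqxx.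
  split=> // [i|i j e|e]; rewrite ?forest0 ?inE //.
  by apply/esym/existsPn.
have [dpos hc] := dens_natP k0 hd.
have Wne : W != set0 by case/andP: cW.
have sparse F : F \subset induced W -> #|F| <= k * (#|W| - ncomp W F).
  move=> sF; have [->|ne] := eqVneq F set0; first by rewrite cards0.
  have sg := subgraphS sF (subgraph_induced W).
  have dFpos : 0 < dnm W F by rewrite /dnm subn_gt0 ncomp_lt.
  have := dens_le_gamma (S := W) (F := induced W) (p := (W, F)).
  rewrite /= subxx sF sg dFpos hg => /(_ isT).
  by rewrite /dens ler_pdivrMr ?ltr0n // -natrM ler_nat.
have [Is dIs] := sparse_forest_decomp (k := k) (subgraph_induced W) sparse.
have sg i : is_subgraph W (Is i) := forest_decomp_subgraph i dIs.
case: (dIs) => fI dI mI.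
have le i : #|Is i| <= #|W| - 1.
  by have := card_forest (sg i) (fI i); have := ncomp_gt0 (Is i) Wne; lia.
have sum : \sum_(i < k) #|Is i| = k * (#|W| - 1).
  rewrite -card_bigcup_part // [RHS](_ : _ = #|induced W|); last first.
    by rewrite hc /dnm connectedb_ncomp.
  by apply: eq_card => e; rewrite mI; apply/bigcupP/existsP => -[i]; exists i.
exists Is; split => // i; apply: ncomp1_connectedb => //.
have := card_forest (sg i) (fI i).
move: (sum_leq_const_eq le sum i) (ncomp_gt0 (Is i) Wne) (ncomp_le W (Is i)); lia.
Qed.

End Density.

Section EdgeDisjointTrees.
Variable G : mgraph.
Local Notation V := (vert G).
Local Notation E := (edge G).
Implicit Types (S : {set V}) (F T : {set E}) (x y : V) (e : E).

Lemma has_edstP k : has_edst G k -> exists Ts : 'I_k -> {set E},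
  (forall i, spanning_tree (Ts i)) /\ (forall i j e, e \in Ts i -> e \in Ts j -> i = j).
Proof.
case=> Ts [hT hd]; exists Ts; split => // i j e ei ej.
by apply/eqP/negP => /negP ij; move: (disjointFr (hd i j ij) ei); rewrite ej.
Qed.

Lemma edst_card k : has_edst G k -> k * #|V|.-1 <= #|E|.
Proof.
case/has_edstP=> Ts [hT dI]; have := card_bigcup_part dI.
rewrite (eq_bigr (fun _ => #|V|.-1)) => [|i _].
  by rewrite sum_nat_const card_ord => <-; rewrite max_card.
by rewrite -(card_spanning_tree (hT i)).
Qed.

Lemma edst_connectedb k F : has_edst G k -> #|F| < k -> connectedb setT (~: F).
Proof.
case/has_edstP=> Ts [hT dI] ltFk.
have [/existsP[i /eqP TF0]|/existsPn TF] := boolP [exists i, Ts i :&: F == set0].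
  apply: (@connectedbS _ _ (Ts i)).
    by rewrite -disjoints_subset -setI_eq0 TF0.
  by move: (hT i); rewrite spanning_treeE => /andP[].
have dIF i j e : e \in Ts i :&: F -> e \in Ts j :&: F -> i = j.
  by move=> /setIP[ei _] /setIP[ej _]; apply: dI ei ej.
have : \sum_(i < k) 1 <= \sum_i #|Ts i :&: F|.
  by apply: leq_sum => i _; rewrite card_gt0; apply: TF.
rewrite -card_bigcup_part // sum_nat_const card_ord muln1.
have : #|\bigcup_i (Ts i :&: F)| <= #|F|.
  by apply/subset_leq_card/bigcupsP => i _; apply: subsetIr.
lia.
Qed.

Definition cross (V1 : {set V}) : {set E} :=
  [set e | ((esrc e \in V1) && (edst e \in ~: V1)) ||
           ((esrc e \in ~: V1) && (edst e \in V1))].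

Lemma cross_disconnect (V1 : {set V}) x y :
  x \in V1 -> y \notin V1 -> ~~ connect (adj (~: cross V1)) x y.
Proof.
move=> xV yV; apply: contra yV; apply: connect_closed xV => a b aV.
case/adjP=> e + [[ea eb]|[ea eb]];
  by rewrite !inE ea eb aV /=; case: (b \in V1).
Qed.

Lemma card_induced_cross (V1 : {set V}) F :
  #|F| = #|F :&: induced V1| + #|F :&: induced (~: V1)| + #|F :&: cross V1|.
Proof.
have cardsUD (A B : {set E}) : A :&: B = set0 -> #|A :|: B| = #|A| + #|B|.
  by move=> AB0; rewrite -cardsUI AB0 cards0 addn0.
rewrite -!cardsUD; [apply: eq_card => e|apply/setP => e..]; rewrite !inE;
  by case: (e \in F); case: (esrc e \in V1); case: (edst e \in V1).
Qed.

Lemma connectedb_cross (V1 : {set V}) F e : connectedb V1 F -> connectedb (~: V1) F ->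
  e \in F -> e \in cross V1 -> connectedb setT F.
Proof.
move=> /andP[ne1 /forall_inP c1] /andP[ne2 /forall_inP c2] eF eC.
have in_side x y : ((x \in V1) = (y \in V1)) -> connect (adj F) x y.
  case: (boolP (x \in V1)) => xV /esym yV.
    by move/forall_inP: (c1 x xV); apply.
  have xV' : x \in ~: V1 by rewrite inE.
  by move/forall_inP: (c2 x xV'); apply; rewrite inE yV.
have [a [b [aV bV ab]]] : exists a b, [/\ a \in V1, b \notin V1 & connect (adj F) a b].
  have ee := connect_edge eF.
  move: eC; rewrite !inE => /orP[/andP[s d]|/andP[s d]].
    by exists (esrc e), (edst e); split.
  by exists (edst e), (esrc e); rewrite connect_adj_sym; split.
have to_a x : connect (adj F) x a.
  case: (boolP (x \in V1)) => xV; first by apply: in_side; rewrite xV aV.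
  apply: connect_trans (in_side x b _) _; first by rewrite (negbTE xV) (negbTE bV).
  by rewrite connect_adj_sym.
rewrite /connectedb; apply/andP; split; first by apply/set0Pn; exists a.
apply/forall_inP => x _; apply/forall_inP => y _.
by apply: connect_trans (to_a x) _; rewrite connect_adj_sym.
Qed.

Lemma spanning_tree_join (V1 : {set V}) (T1 T2 : {set E}) e :
  is_subgraph V1 T1 -> forest T1 -> connectedb V1 T1 ->
  is_subgraph (~: V1) T2 -> forest T2 -> connectedb (~: V1) T2 ->
  e \in cross V1 -> spanning_tree (e |: (T1 :|: T2)).
Proof.
move=> sg1 f1 c1 sg2 f2 c2 eC; set T := e |: (T1 :|: T2).
have cT : connectedb setT T.
  apply: (connectedb_cross (V1 := V1) _ _ (setU11 e _) eC).
    by apply: connectedbS c1; rewrite /T setUCA subsetUl.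
  by apply: connectedbS c2; rewrite /T setUA subsetUr.
rewrite spanning_treeE cT /=; apply: (forest_card (subgraphT T)).
have in1 f : f \in T1 -> (esrc f \in V1) && (edst f \in V1) := subgraphP sg1.
have in2 f : f \in T2 -> (esrc f \in ~: V1) && (edst f \in ~: V1) := subgraphP sg2.
have eT12 : e \notin T1 :|: T2.
  apply/negP; rewrite in_setU => /orP[/in1|/in2]; move: eC; rewrite !inE;
  by case: (esrc e \in V1); case: (edst e \in V1).
have T12 : T1 :&: T2 = set0.
  apply/setP => f; rewrite !inE; apply/negP => /andP[/in1 /andP[s _] /in2].
  by rewrite inE s.
have ne1 : 0 < #|V1| by rewrite card_gt0; case/andP: c1.
have ne2 : 0 < #|~: V1| by rewrite card_gt0; case/andP: c2.
have cT12 : #|T1 :|: T2| = #|T1| + #|T2| by rewrite -cardsUI T12 cards0 addn0.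
rewrite connectedb_ncomp // cardsT -(cardsC V1) /T cardsU1 eT12 cT12.
rewrite (card_connected_forest sg1 f1 c1) (card_connected_forest sg2 f2 c2) /=; lia.
Qed.

End EdgeDisjointTrees.

Lemma in_F_of_edst (G : mgraph) k :
  1 < #|vert G| -> has_edst G k -> #|edge G| = k * #|vert G|.-1 ->
  (exists F : {set edge G}, #|F| = k /\ ~~ connectedb setT (~: F)) -> in_F k G.
Proof.
move=> nV hk cardE cut; split => //.
- by split => // F; apply: edst_connectedb.
- split => // /edst_card; rewrite cardE; move: nV.
  by case: #|vert G| => [//|[//|n]] _ /=; rewrite mulSn; lia.
- by move=> G' hV' _ [/edst_card]; rewrite cardE -hV'.
Qed.

Section PathMultigraph.
Variables (m k : nat).

(* Edge (j, i) is the i-th copy of the edge joining vertices j and j + 1. *)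
Definition path_src (e : 'I_m.+1 * 'I_k) : 'I_m.+2 := widen_ord (leqnSn _) e.1.
Definition path_dst (e : 'I_m.+1 * 'I_k) : 'I_m.+2 := lift ord0 e.1.

Lemma path_loopless e : path_src e != path_dst e.
Proof. by rewrite -val_eqE /= /bump /= add1n neq_ltn ltnSn. Qed.

Definition path_mgraph := MGraph path_loopless.

Local Notation G := path_mgraph.

Definition path_copy (i : 'I_k) : {set edge G} := [set e : edge G | e.2 == i].

Lemma path_copy_connect0 i t (ht : t < m.+2) :
  connect (adj (path_copy i)) (ord0 : vert G) (Ordinal ht).
Proof.
elim: t ht => [|t IH] ht; first by rewrite (_ : Ordinal ht = ord0) //; apply: val_inj.
have ht1 : t < m.+1 by [].
apply: connect_trans (IH (ltnW ht)) (connect1 _).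
apply/adjP; exists ((Ordinal ht1, i) : edge G); first by rewrite inE.
by left; split; apply: val_inj.
Qed.

Lemma path_copy_spanning_tree i : spanning_tree (path_copy i).
Proof.
have cT : connectedb setT (path_copy i).
  rewrite /connectedb; apply/andP; split; first by apply/set0Pn; exists ord0.
  apply/forall_inP => x _; apply/forall_inP => y _.
  have from0 (z : vert G) : connect (adj (path_copy i)) ord0 z.
    by rewrite (_ : z = Ordinal (ltn_ord z)) ?path_copy_connect0 //; apply: val_inj.
  by apply: connect_trans (from0 y); rewrite connect_adj_sym.
rewrite spanning_treeE cT /=; apply: (forest_card (subgraphT _)).
have -> : #|path_copy i| = #|'I_m.+1|.
  rewrite -(card_imset _ (f := fun j : 'I_m.+1 => ((j, i) : edge G))) => [|a b [] //].
  apply: eq_card => e; rewrite inE; apply/eqP/imsetP => [<-|[j _ ->]] //.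
  by exists e.1 => //; case: e.
by rewrite connectedb_ncomp // cardsT !card_ord addn1.
Qed.

Lemma path_mgraph_in_F : in_F k G.
Proof.
apply: in_F_of_edst; rewrite ?card_ord //=.
- exists path_copy; split => [|i j ij]; first exact: path_copy_spanning_tree.
  rewrite -setI_eq0; apply/eqP/setP => e; rewrite !inE.
  by apply/negP => /andP[/eqP ei /eqP ej]; move: ij; rewrite -ei -ej eqxx.
- by rewrite card_prod !card_ord mulnC.
exists [set e : edge G | e.1 == ord0]; split.
  rewrite -[RHS](card_ord k) -(card_imset _ (f := fun j : 'I_k => ((ord0, j) : edge G))).
    apply: eq_card => e; rewrite inE; apply/eqP/imsetP => [<-|[j _ ->]] //.
    by exists e.2 => //; case: e.
  by move=> a b [].
have h1 : 1 < m.+2 by [].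
apply/negP => /andP[_ /forall_inP/(_ (ord0 : vert G) (in_setT _))
  /forall_inP/(_ (Ordinal h1 : vert G) (in_setT _))] c.
have hW (a b : vert G) : a \in [set ord0] ->
    adj (~: [set e : edge G | e.1 == ord0]) a b -> b \in [set ord0].
  move=> /set1P -> /adjP[[j i]]; rewrite !inE /= => ne [[h h']|[h h']].
    move/(congr1 val): h; rewrite /path_src /= => h.
    by move: ne; rewrite -val_eqE /= h.
  by move/(congr1 val): h'; rewrite /path_dst /= /bump.
by have /set1P/(congr1 val) := connect_closed hW (set11 _) c.
Qed.

End PathMultigraph.

Lemma edge_join_edst (G : mgraph) k (V1 : {set vert G}) (I1 I2 : 'I_k -> {set edge G}) :
  tree_decomp V1 I1 -> tree_decomp (~: V1) I2 -> #|cross V1| = k -> has_edst G k.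
Proof.
move=> [dI1 cI1] [dI2 cI2] hC.
have [fI1 dI1' _] := dI1; have [fI2 dI2' _] := dI2.
pose c (i : 'I_k) := enum_val (cast_ord (esym hC) i).
have cC i : c i \in cross V1 by apply: enum_valP.
have c_inj : injective c by move=> i j /enum_val_inj/cast_ord_inj.
have in1 i e : e \in I1 i -> (esrc e \in V1) && (edst e \in V1).
  exact: subgraphP (forest_decomp_subgraph i dI1).
have in2 i e : e \in I2 i -> (esrc e \in ~: V1) && (edst e \in ~: V1).
  exact: subgraphP (forest_decomp_subgraph i dI2).
have cross_I1 i j : c i \notin I1 j.
  by apply/negP => /in1/andP[s d]; move: (cC i); rewrite !inE s d.
have cross_I2 i j : c i \notin I2 j.
  by apply/negP => /in2; move: (cC i); rewrite !inE; do 2!case: (_ \in V1).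
have I1_I2 i j e : e \in I1 i -> e \notin I2 j.
  by move/in1/andP=> [s _]; apply/negP => /in2; rewrite !inE s.
pose T i := c i |: (I1 i :|: I2 i).
exists T; split => [i|i j ij].
  apply: spanning_tree_join (cC i);
    by [apply: forest_decomp_subgraph dI1|apply: forest_decomp_subgraph dI2|].
rewrite -setI_eq0; apply/eqP/setP => e; rewrite !inE; apply/negP => /andP[].
move=> /or3P[/eqP->|ei|ei] /or3P[/eqP ej|ej|ej]; apply/negP: ij; rewrite negbK.
- by apply/eqP/c_inj.
- by rewrite (negbTE (cross_I1 _ _)) in ej.
- by rewrite (negbTE (cross_I2 _ _)) in ej.
- by rewrite ej (negbTE (cross_I1 _ _)) in ei.
- by apply/eqP; apply: dI1' ei ej.
- by rewrite (negbTE (I1_I2 _ _ _ ei)) in ej.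
- by rewrite ej (negbTE (cross_I2 _ _)) in ei.
- by rewrite (negbTE (I1_I2 _ _ _ ej)) in ei.
- by apply/eqP; apply: dI2' ei ej.
Qed.

Lemma edge_join_in_F k (G : mgraph) : 0 < k -> edge_join_decomp G k -> in_F k G.
Proof.
move=> k0 [V1 [c1 c2 hC u1 u2]].
have [I1 t1] := K1_or_ud_tree_decomp k0 c1 u1.
have [I2 t2] := K1_or_ud_tree_decomp k0 c2 u2.
have n1 : 0 < #|V1| by rewrite card_gt0; case/andP: c1.
have n2 : 0 < #|~: V1| by rewrite card_gt0; case/andP: c2.
have nV : #|V1| + #|~: V1| = #|vert G| by rewrite cardsC.
apply: in_F_of_edst; first lia.
- exact: edge_join_edst t1 t2 hC.
- rewrite -cardsT (card_induced_cross V1) !setTI.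
  rewrite (tree_decomp_card t1) (tree_decomp_card t2).
  have hCk : #|cross V1| = k := hC.
  rewrite hCk (_ : #|vert G|.-1 = #|V1| - 1 + (#|~: V1| - 1) + 1); last lia.
  by rewrite !mulnDr muln1.
exists (cross V1); split => //.
case/andP: c1 => /set0Pn[x xV] _; case/andP: c2 => /set0Pn[y]; rewrite inE => yV _.
apply/negP => /andP[_ /forall_inP/(_ x (in_setT x))/forall_inP/(_ y (in_setT y))].
by apply/negP/cross_disconnect.
Qed.

Section Cuts.
Variable G : mgraph.
Local Notation V := (vert G).
Local Notation E := (edge G).
Implicit Types (F T : {set E}) (x y : V).

Lemma cross_component_subset F x : cross [set z | connect (adj (~: F)) x z] \subset F.
Proof.
apply/subsetP => e eC; apply/negPn/negP => eF; move: eC; rewrite !inE.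
have ee : connect (adj (~: F)) (esrc e) (edst e) by apply: connect_edge; rewrite inE.
have -> : connect (adj (~: F)) x (esrc e) = connect (adj (~: F)) x (edst e).
  apply/idP/idP => h; first exact: connect_trans h ee.
  by apply: connect_trans h _; rewrite connect_adj_sym.
by case: (connect _ _ _).
Qed.

Lemma spanning_tree_meets_cross T (V1 : {set V}) x y : spanning_tree T ->
  x \in V1 -> y \notin V1 -> 0 < #|T :&: cross V1|.
Proof.
move=> hT xV yV; rewrite card_gt0; apply/negP => /eqP TC0.
have cT : connect (adj T) x y.
  move: hT; rewrite spanning_treeE => /andP[/andP[_ /forall_inP cT] _].
  by move/forall_inP: (cT x (in_setT x)); apply.
move/negP: yV; apply; apply: (connect_closed _ xV cT) => a b aV /adjP[e eT ab].
apply/negPn/negP => bV.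
have : e \in T :&: cross V1.
  by rewrite !inE eT; case: ab => -[-> ->]; rewrite aV (negbTE bV).
by rewrite TC0 inE.
Qed.

Lemma spanning_tree_split T (V1 : {set V}) : spanning_tree T ->
  #|T :&: cross V1| = 1 -> V1 != set0 -> ~: V1 != set0 ->
  connectedb V1 (T :&: induced V1) /\ connectedb (~: V1) (T :&: induced (~: V1)).
Proof.
move=> hT one ne1 ne2; have fT : forest T by move: hT; rewrite spanning_treeE => /andP[].
have sg1 := subgraphS (subsetIr T _) (subgraph_induced V1).
have sg2 := subgraphS (subsetIr T _) (subgraph_induced (~: V1)).
have c1 := card_forest sg1 (forestS (subsetIl _ _) fT).
have c2 := card_forest sg2 (forestS (subsetIl _ _) fT).
have g1 := ncomp_gt0 (T :&: induced V1) ne1.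
have g2 := ncomp_gt0 (T :&: induced (~: V1)) ne2.
have := card_spanning_tree hT; rewrite (card_induced_cross V1 T) one -(cardsC V1).
by split; apply: ncomp1_connectedb => //; lia.
Qed.

Lemma edst_tight_decomp k : has_edst G k -> #|E| = k * #|V|.-1 ->
  exists Ts : 'I_k -> {set E},
    (forall i, spanning_tree (Ts i)) /\ forest_decomp Ts setT.
Proof.
case/has_edstP=> Ts [hT dI] cardE; exists Ts; split => //; split => // [i|e].
  by move: (hT i); rewrite spanning_treeE => /andP[].
suff : \bigcup_i Ts i = setT.
  by move/setP/(_ e); rewrite !inE => /bigcupP[i _ ei]; apply/esym/existsP; exists i.
apply/eqP; rewrite eqEcard subsetT cardsT card_bigcup_part // cardE.
rewrite -[k in k * _]card_ord -sum_nat_const; apply: leq_sum => i _.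
by rewrite -(card_spanning_tree (hT i)).
Qed.

End Cuts.

Lemma in_F_card k (G : mgraph) : in_F k G -> #|edge G| = k * #|vert G|.-1.
Proof.
case=> nV _ [hk _] minE; apply/eqP; rewrite eqn_leq edst_card // andbT.
have [m hm] : exists m, #|vert G| = m.+2 by exists (#|vert G| - 2); lia.
have [_ kP tP _] := path_mgraph_in_F m k.
have := minE (path_mgraph m k); rewrite /= card_ord card_prod !card_ord hm mulnC.
by apply.
Qed.

Section Forward.
Variables (G : mgraph) (k : nat) (Ts : 'I_k -> {set edge G}).
Hypotheses (k_gt0 : 0 < k) (Ts_decomp : forest_decomp Ts setT).

Lemma K1_or_ud_of_trees (W : {set vert G}) : W != set0 ->
  (forall i, connectedb W (Ts i :&: induced W)) ->
  connectedb W (induced W) /\ K1_or_ud W k.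
Proof.
move=> ne cTW; have [fT dT cT] := Ts_decomp.
have cW : connectedb W (induced W).
  by apply: connectedbS (cTW (Ordinal k_gt0)); apply: subsetIr.
split => //.
have tW : tree_decomp W (fun i => Ts i :&: induced W).
  split => // ; split => [i|i j e /setIP[ei _] /setIP[ej _]|e]; last 2 first.
  - exact: dT ei ej.
  - apply/idP/existsP => [eW|[i /setIP[]//]].
    by move: (cT e); rewrite inE => /esym/existsP[i ei]; exists i; rewrite inE ei.
  exact: forestS (subsetIl _ _) (fT i).
have dnmW : dnm W (induced W) = #|W| - 1 by rewrite /dnm connectedb_ncomp.
have [W1|W1] := eqVneq #|W| 1; [by left|right].
have dpos : 0 < dnm W (induced W) by rewrite dnmW; move: ne; rewrite -card_gt0; lia.
have hd : dens W (induced W) = (k%:R)%R.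
  by apply: dens_nat; rewrite // dnmW (tree_decomp_card tW).
split => //; apply/le_anti/andP; split.
  by apply: gamma_le_nat => S' F' _ _ sg; apply: forest_decomp_sparse Ts_decomp sg.
rewrite -hd; apply: (dens_le_gamma (p := (W, induced W))).
by rewrite /= !subxx subgraph_induced.
Qed.

End Forward.

Lemma in_F_edge_join k (G : mgraph) : 0 < k -> in_F k G -> edge_join_decomp G k.
Proof.
move=> k0 FG; have cardE := in_F_card FG.
case: FG => nV [[F [hF ncF]] _] [hk _] _.
have [Ts [hT dTs]] := edst_tight_decomp hk cardE.
have [x [y nxy]] : exists x y, ~~ connect (adj (~: F)) x y.
  move: ncF; rewrite /connectedb -card_gt0 cardsT (ltnW nV) /=.
  by case/forall_inPn => x _ /forall_inPn[y _ nxy]; exists x, y.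
pose V1 := [set z | connect (adj (~: F)) x z].
have xV : x \in V1 by rewrite inE connect0.
have yV : y \notin V1 by rewrite inE.
have meet i : 1 <= #|Ts i :&: cross V1| := spanning_tree_meets_cross (hT i) xV yV.
have sumC := forest_decomp_card_setI (cross V1) dTs.
have hC : #|cross V1| = k.
  apply/eqP; rewrite eqn_leq -{1}hF subset_leq_card ?cross_component_subset //=.
  by rewrite -sumC -[k in k <= _]muln1 -{1}(card_ord k) -sum_nat_const leq_sum.
have one := sum_geq_const_eq meet (etrans sumC (etrans hC (esym (muln1 k)))).
have ne1 : V1 != set0 by apply/set0Pn; exists x.
have ne2 : ~: V1 != set0 by apply/set0Pn; exists y; rewrite inE.
have split_i i := spanning_tree_split (hT i) (one i) ne1 ne2.
have [cW1 u1] := K1_or_ud_of_trees k0 dTs ne1 (fun i => (split_i i).1).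
have [cW2 u2] := K1_or_ud_of_trees k0 dTs ne2 (fun i => (split_i i).2).
by exists V1; split.
Qed.

Theorem theorem4p2 (k : nat) (G : mgraph) :
  0 < k -> (in_F k G <-> edge_join_decomp G k).
Proof. by move=> k0; split; [apply: in_F_edge_join | apply: edge_join_in_F]. Qed.
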